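(* Let $\Theta=(\alpha,\rho_r,\rho_d,\rho_s,\rho_0,T)$ with $\alpha>1$, $\rho_r,\rho_d,\rho_s,\rho_0>0$, $T>1$, and $K_{max}(\Theta):=\min\big(\frac T4,\frac{\rho_r}{3\rho_0},\frac{3\rho_d}{2\rho_0}\big)>10$. Then for every $R>0$: (i) $R<R_{max}(\Theta)\iff \frac{R}{x'(R,\Theta)}<K_{max}(\Theta)\iff K'_{csi}(R,\Theta)<K_{max}(\Theta)$; (ii) $\rho_r<\frac{\alpha}{(1+\rho_d/\rho_r)^2}\frac{g^2(R)}{R}$ holds if and only if $K'_{csi}(R,\Theta)>1$.
   Context: $g(x)=\sqrt{\frac{x}{2^x-1}}\big(2^x x\ln2-2^x+1\big)$, $x>0$. $x'(R,\Theta)>0$ is the unique solution of $g(x')=(1+\rho_d/\rho_r)\sqrt{R\rho_r/\alpha}$. $R_{max}(\Theta)=c(\Theta)K_{max}(\Theta)$ where $c(\Theta)>0$ is the unique positive solution of $g(c)/\sqrt c=(1+\rho_d/\rho_r)\sqrt{K_{max}(\Theta)\rho_r/\alpha}$. For real $M>K\ge1$, $\frac{1}{\zeta_{csi}(M,K,R,\Theta)}=\frac1R\big[\frac{\alpha K}{M-K}(2^{R/K}-1)+M\rho_r+K\rho_d+\rho_s\big]$, and $K'_{csi}(R,\Theta)$ is the $K$-component of the (unique) maximizer of $\zeta_{csi}$ over real $(M,K)$ with $1\le K\le K_{max}(\Theta)$, $M>K$. *)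

From Stdlib Require Import Reals Lra ClassicalEpsilon.
Open Scope R_scope.

Record Theta := mkTheta {
  alpha : R; rho_r : R; rho_d : R; rho_s : R; rho_0 : R; Tt : R }.

Definition g (x : R) : R :=
  sqrt (x / (Rpower 2 x - 1)) * (Rpower 2 x * x * ln 2 - Rpower 2 x + 1).

Definition Kmax (th : Theta) : R :=
  Rmin (Rmin (Tt th / 4) (rho_r th / (3 * rho_0 th))) (3 * rho_d th / (2 * rho_0 th)).

Definition xprime (Rate : R) (th : Theta) : R :=
  epsilon (inhabits 0) (fun x => 0 < x /\
    g x = (1 + rho_d th / rho_r th) * sqrt (Rate * rho_r th / alpha th)).

Definition cTheta (th : Theta) : R :=
  epsilon (inhabits 0) (fun c => 0 < c /\
    g c / sqrt c = (1 + rho_d th / rho_r th) * sqrt (Kmax th * rho_r th / alpha th)).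

Definition R_max (th : Theta) : R := cTheta th * Kmax th.

Definition zeta_csi (M K Rate : R) (th : Theta) : R :=
  / ((1 / Rate) * (alpha th * K / (M - K) * (Rpower 2 (Rate / K) - 1)
                   + M * rho_r th + K * rho_d th + rho_s th)).

Definition csi_domain (M K : R) (th : Theta) : Prop :=
  1 <= K /\ K <= Kmax th /\ K < M.

Definition is_csi_maximizer (M K Rate : R) (th : Theta) : Prop :=
  csi_domain M K th /\
  forall M' K', csi_domain M' K' th -> zeta_csi M' K' Rate th <= zeta_csi M K Rate th.

Definition Kcsi (Rate : R) (th : Theta) : R :=
  epsilon (inhabits 0) (fun K => exists M, is_csi_maximizer M K Rate th).

From Stdlib Require Import Reals Lra Ranalysis5 ClassicalEpsilon.
From Coquelicot Require Import Coquelicot.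
Open Scope R_scope.

(* Put x = R/K.  Minimising the cost over M by AM-GM leaves
   E(x) = 2 sqrt(rho_r alpha (R/x)(2^x - 1)) + (R/x)(rho_r + rho_d),
   whose derivative has the sign of sqrt(rho_r alpha R) g(x) - R(rho_r + rho_d).
   As g is increasing, E decreases up to x'(R) and increases afterwards, so over
   the constraint 1 <= K <= K_max, i.e. R/K_max <= x <= R, the unique minimiser is
   x'(R) clamped to [R/K_max, R], and K'_csi = R / clamp.  The equivalences then
   follow from the monotonicity of g and of g(x)/sqrt x, which also make x' and c
   well defined (both are onto (0, oo) by the intermediate value theorem). *)

Lemma strict_incr_of_derive_pos (f f' : R -> R) a b :
  a < b -> (forall c, a <= c <= b -> is_derive f c (f' c)) ->
  (forall c, a < c < b -> 0 < f' c) -> f a < f b.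
Proof.
  intros hab hder hpos.
  destruct (MVT_cor2 f f' a b hab) as [c [hmvt hc]].
  { intros c hc; apply is_derive_Reals, hder, hc. }
  specialize (hpos c hc); nra.
Qed.

Lemma strict_decr_of_derive_neg (f f' : R -> R) a b :
  a < b -> (forall c, a <= c <= b -> is_derive f c (f' c)) ->
  (forall c, a < c < b -> f' c < 0) -> f b < f a.
Proof.
  intros hab hder hneg.
  destruct (MVT_cor2 f f' a b hab) as [c [hmvt hc]].
  { intros c hc; apply is_derive_Reals, hder, hc. }
  specialize (hneg c hc); nra.
Qed.

Lemma continuity_pt_of_is_derive (f : R -> R) x l :
  is_derive f x l -> continuity_pt f x.
Proof. intro hder; apply derivable_continuous_pt; exists l; now apply is_derive_Reals. Qed.

Lemma ex_preimage_of_continuity (f : R -> R) a b t :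
  (forall x, 0 < x -> continuity_pt f x) -> 0 < a -> a < b -> f a < t -> t < f b ->
  exists x, 0 < x /\ f x = t.
Proof.
  intros hcont ha hab hfa hfb.
  destruct (IVT_interv (fun x => f x - t) a b) as [x [hx hfx]]; try lra.
  - intros x hx; apply continuity_pt_minus; [apply hcont; lra | apply continuity_pt_const; now intros ? ?].
  - exists x; split; lra.
Qed.

Lemma lt_iff_of_strict_incr (f : R -> R) a b :
  (forall x y, 0 < x -> x < y -> f x < f y) -> 0 < a -> 0 < b -> (a < b <-> f a < f b).
Proof.
  intros hf ha hb; split; [now apply hf|]; intro hfab.
  destruct (Rtotal_order a b) as [hlt | [-> | hgt]]; [exact hlt | lra |].
  pose proof (hf b a hb hgt); lra.
Qed.

Lemma lt_iff_pow2_lt a b : 0 <= a -> 0 <= b -> (a < b <-> a ^ 2 < b ^ 2).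
Proof. intros ha hb; split; intro h; [nra|]; destruct (Rlt_or_le a b); nra. Qed.

Lemma amgm_le A r d : 0 < A -> 0 < r -> 0 < d -> 2 * sqrt (r * A) <= A / d + r * d.
Proof.
  intros hA hr hd.
  set (s := sqrt (r * A)).
  assert (hs : s * s = r * A) by (apply sqrt_sqrt; nra).
  assert (hsq : A / d + r * d - 2 * s = (r * d - s) ^ 2 / (r * d)).
  { replace A with (s * s / r) by (rewrite hs; field; lra); field; lra. }
  assert (0 <= (r * d - s) ^ 2 / (r * d)).
  { apply Rmult_le_pos; [apply pow2_ge_0 | apply Rlt_le, Rinv_0_lt_compat; nra]. }
  lra.
Qed.

Lemma amgm_eq A r : 0 < A -> 0 < r ->
  A / sqrt (A / r) + r * sqrt (A / r) = 2 * sqrt (r * A).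
Proof.
  intros hA hr.
  assert (hAr : 0 < A / r) by (apply Rdiv_lt_0_compat; lra).
  set (d := sqrt (A / r)).
  assert (hd : 0 < d) by (apply sqrt_lt_R0; lra).
  assert (hdd : d * d = A / r) by (apply sqrt_sqrt; lra).
  assert (hs : sqrt (r * A) = r * d).
  { apply sqrt_lem_1; try nra.
    replace (r * d * (r * d)) with (r * r * (d * d)) by ring; rewrite hdd; field; lra. }
  rewrite hs; replace A with (r * (d * d)) at 1 by (rewrite hdd; field; lra); field; lra.
Qed.

Definition clamp (lo hi x : R) : R := Rmax lo (Rmin x hi).

Lemma clamp_spec lo hi x : lo <= hi ->
  lo <= clamp lo hi x <= hi /\
  (lo < clamp lo hi x -> clamp lo hi x <= x) /\
  (clamp lo hi x < hi -> x <= clamp lo hi x).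
Proof. intro h; unfold clamp, Rmax, Rmin; destruct (Rle_dec x hi), (Rle_dec lo _); lra. Qed.

Lemma lo_lt_clamp_iff lo hi x : lo < hi -> (lo < clamp lo hi x <-> lo < x).
Proof. intro h; unfold clamp, Rmax, Rmin; destruct (Rle_dec x hi), (Rle_dec lo _); lra. Qed.

Lemma clamp_lt_hi_iff lo hi x : lo < hi -> (clamp lo hi x < hi <-> x < hi).
Proof. intro h; unfold clamp, Rmax, Rmin; destruct (Rle_dec x hi), (Rle_dec lo _); lra. Qed.

Lemma clamp_strict_argmin (f : R -> R) x0 lo hi :
  0 < lo <= hi ->
  (forall a b, 0 < a -> a < b -> b <= x0 -> f b < f a) ->
  (forall a b, x0 <= a -> a < b -> f a < f b) ->
  forall x, lo <= x <= hi -> x <> clamp lo hi x0 -> f (clamp lo hi x0) < f x.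
Proof.
  intros hlo hdecr hincr x hx hne.
  destruct (clamp_spec lo hi x0 (proj2 hlo)) as [hc [hc_lo hc_hi]].
  destruct (Rlt_or_le x (clamp lo hi x0)) as [hlt | hle].
  - apply hdecr; lra.
  - apply hincr; lra.
Qed.

Lemma ln2_pos : 0 < ln 2.
Proof. pose proof ln_lt_2; lra. Qed.

Lemma ln2_lt_1 : ln 2 < 1.
Proof.
  rewrite <- (ln_exp 1); apply ln_increasing; [lra|].
  pose proof (exp_ineq1 1); lra.
Qed.

Lemma Rpower2_gt_lin x : x <> 0 -> 1 + x * ln 2 < Rpower 2 x.
Proof. intro hx; apply exp_ineq1; pose proof ln2_pos; intro h; apply hx; nra. Qed.

Lemma Rpower2_gt_1 x : 0 < x -> 1 < Rpower 2 x.
Proof. intro hx; pose proof (Rpower2_gt_lin x ltac:(lra)); pose proof ln2_pos; nra. Qed.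

Lemma Rpower2_le_2 x : x <= 1 -> Rpower 2 x <= 2.
Proof. intro hx; rewrite <- (Rpower_1 2) at 2 by lra; apply Rle_Rpower; lra. Qed.

Definition gnum (x : R) : R := Rpower 2 x * x * ln 2 - Rpower 2 x + 1.

Lemma g_eq x : g x = sqrt (x / (Rpower 2 x - 1)) * gnum x.
Proof. reflexivity. Qed.

Lemma gnum_pos x : 0 < x -> 0 < gnum x.
Proof.
  intro hx; pose proof ln2_pos; pose proof (Rpower2_gt_1 x hx).
  assert (hinv : 1 - x * ln 2 < / Rpower 2 x).
  { rewrite <- Rpower_Ropp; pose proof (Rpower2_gt_lin (- x) ltac:(lra)); lra. }
  apply (Rmult_lt_compat_l (Rpower 2 x)) in hinv; [|lra].
  rewrite Rinv_r in hinv by lra; unfold gnum; nra.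
Qed.

Lemma gnum_lt x : 0 < x -> gnum x < x * ln 2 * (Rpower 2 x - 1).
Proof. intro hx; pose proof (Rpower2_gt_lin x ltac:(lra)); unfold gnum; nra. Qed.

Definition hsq (x : R) : R := gnum x ^ 2 / (Rpower 2 x - 1).
Definition gsq (x : R) : R := x * hsq x.

Lemma hsq_pos x : 0 < x -> 0 < hsq x.
Proof.
  intro hx; pose proof (Rpower2_gt_1 x hx); pose proof (gnum_pos x hx).
  apply Rdiv_lt_0_compat; [apply pow_lt|]; lra.
Qed.

Lemma gsq_pos x : 0 < x -> 0 < gsq x.
Proof. intro hx; pose proof (hsq_pos x hx); unfold gsq; nra. Qed.

Lemma g_eq_sqrt_gsq x : 0 < x -> g x = sqrt (gsq x).
Proof.
  intro hx; pose proof (Rpower2_gt_1 x hx); pose proof (gnum_pos x hx).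
  rewrite g_eq, <- (sqrt_pow2 (gnum x)), <- sqrt_mult_alt by
    (try apply Rlt_le, Rdiv_lt_0_compat; lra).
  f_equal; unfold gsq, hsq; field; lra.
Qed.

Lemma g_div_sqrt_eq_sqrt_hsq x : 0 < x -> g x / sqrt x = sqrt (hsq x).
Proof.
  intro hx; rewrite g_eq_sqrt_gsq, <- sqrt_div_alt by lra.
  f_equal; unfold gsq; field; lra.
Qed.

Lemma is_derive_hsq x : 0 < x -> is_derive hsq x
  (gnum x * ln 2 * Rpower 2 x * (2 * ln 2 * x * (Rpower 2 x - 1) - gnum x)
     / (Rpower 2 x - 1) ^ 2).
Proof.
  intro hx; pose proof (Rpower2_gt_1 x hx).
  unfold hsq, gnum, Rpower in *; auto_derive; [lra | field; lra].
Qed.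

Lemma hsq_incr x y : 0 < x -> x < y -> hsq x < hsq y.
Proof.
  intros hx hxy; eapply strict_incr_of_derive_pos; [exact hxy | intros; apply is_derive_hsq; lra |].
  intros c hc; assert (c_pos : 0 < c) by lra.
  pose proof ln2_pos; pose proof (Rpower2_gt_1 c c_pos).
  pose proof (gnum_pos c c_pos); pose proof (gnum_lt c c_pos).
  apply Rdiv_lt_0_compat; [|apply pow_lt; lra].
  apply Rmult_lt_0_compat; [|nra].
  repeat apply Rmult_lt_0_compat; lra.
Qed.

Lemma gsq_incr x y : 0 < x -> x < y -> gsq x < gsq y.
Proof.
  intros hx hxy; pose proof (hsq_pos x hx); pose proof (hsq_incr x y hx hxy).
  unfold gsq; nra.
Qed.

Lemma g_incr x y : 0 < x -> x < y -> g x < g y.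
Proof.
  intros hx hxy; rewrite !g_eq_sqrt_gsq by lra; apply sqrt_lt_1_alt.
  split; [apply Rlt_le, gsq_pos | apply gsq_incr]; lra.
Qed.

Lemma g_div_sqrt_incr x y : 0 < x -> x < y -> g x / sqrt x < g y / sqrt y.
Proof.
  intros hx hxy; rewrite !g_div_sqrt_eq_sqrt_hsq by lra; apply sqrt_lt_1_alt.
  split; [apply Rlt_le, hsq_pos | apply hsq_incr]; lra.
Qed.

Lemma g_pos x : 0 < x -> 0 < g x.
Proof. intro hx; rewrite g_eq_sqrt_gsq by lra; apply sqrt_lt_R0, gsq_pos, hx. Qed.

Lemma hsq_lt_id x : 0 < x <= 1 -> hsq x < x.
Proof.
  intro hx; pose proof ln2_pos; pose proof ln2_lt_1.
  pose proof (Rpower2_gt_1 x (proj1 hx)); pose proof (Rpower2_le_2 x (proj2 hx)).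
  pose proof (gnum_pos x (proj1 hx)); pose proof (gnum_lt x (proj1 hx)).
  assert (hbound : gnum x ^ 2 < (x * ln 2) ^ 2 * (Rpower 2 x - 1) * (Rpower 2 x - 1)) by nra.
  unfold hsq; apply Rlt_div_l; [lra|].
  assert ((x * ln 2) ^ 2 <= x).
  { assert (ln 2 ^ 2 <= 1) by nra; assert (x * x <= x) by nra.
    replace ((x * ln 2) ^ 2) with (x * x * ln 2 ^ 2) by ring; nra. }
  assert ((x * ln 2) ^ 2 * (Rpower 2 x - 1) <= x) by nra.
  nra.
Qed.

Lemma hsq_gt x : 2 <= x * ln 2 -> x * ln 2 < hsq x.
Proof.
  intro hx; pose proof ln2_pos; assert (x_pos : 0 < x) by nra.
  pose proof (Rpower2_gt_lin x ltac:(lra)); pose proof (Rpower2_gt_1 x x_pos).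
  assert (hnum : Rpower 2 x < gnum x) by (unfold gnum; nra).
  unfold hsq; apply (Rlt_div_r (x * ln 2)); [lra|].
  assert (x * ln 2 * (Rpower 2 x - 1) < Rpower 2 x * Rpower 2 x) by nra.
  assert (Rpower 2 x * Rpower 2 x < gnum x * gnum x) by nra.
  replace (gnum x ^ 2) with (gnum x * gnum x) by ring; lra.
Qed.

Lemma continuity_pt_hsq x : 0 < x -> continuity_pt hsq x.
Proof. intro hx; eapply continuity_pt_of_is_derive, is_derive_hsq, hx. Qed.

Lemma continuity_pt_gsq x : 0 < x -> continuity_pt gsq x.
Proof.
  intro hx; apply continuity_pt_mult; [apply derivable_continuous_pt, derivable_pt_id |].
  now apply continuity_pt_hsq.
Qed.

Lemma hsq_gsq_cross t : 0 < t ->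
  exists a b, 0 < a < b /\ hsq a < t /\ gsq a < t /\ t < hsq b /\ t < gsq b.
Proof.
  intro ht; pose proof ln2_pos; pose proof ln2_lt_1.
  set (a := Rmin 1 (t / 2)); set (b := (t + 2) / ln 2).
  assert (ha : 0 < a <= 1) by (unfold a, Rmin; destruct (Rle_dec 1 (t / 2)); lra).
  assert (hat : a < t) by (unfold a, Rmin; destruct (Rle_dec 1 (t / 2)); lra).
  assert (hb : b * ln 2 = t + 2) by (unfold b; field; lra).
  assert (hb1 : 1 < b) by nra.
  pose proof (hsq_lt_id a ha); pose proof (hsq_pos a (proj1 ha)).
  pose proof (hsq_gt b ltac:(lra)).
  exists a, b; unfold gsq; repeat split; nra.
Qed.

Lemma g_surj t : 0 < t -> exists x, 0 < x /\ g x = t.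
Proof.
  intro ht; destruct (hsq_gsq_cross (t ^ 2) (pow_lt t 2 ht)) as (a & b & hab & _ & ha & _ & hb).
  destruct (ex_preimage_of_continuity gsq a b (t ^ 2) continuity_pt_gsq) as (x & hx & hgx); try lra.
  exists x; split; [exact hx|]; rewrite g_eq_sqrt_gsq, hgx by exact hx; apply sqrt_pow2; lra.
Qed.

Lemma g_div_sqrt_surj t : 0 < t -> exists x, 0 < x /\ g x / sqrt x = t.
Proof.
  intro ht; destruct (hsq_gsq_cross (t ^ 2) (pow_lt t 2 ht)) as (a & b & hab & ha & _ & hb & _).
  destruct (ex_preimage_of_continuity hsq a b (t ^ 2) continuity_pt_hsq) as (x & hx & hhx); try lra.
  exists x; split; [exact hx|]; rewrite g_div_sqrt_eq_sqrt_hsq, hhx by exact hx; apply sqrt_pow2; lra.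
Qed.

Section CsiOptimum.

Variables (th : Theta) (Rate : R).
Local Notation al := (alpha th).
Local Notation rr := (rho_r th).
Local Notation rd := (rho_d th).
Local Notation rs := (rho_s th).
Hypotheses (halpha : 0 < al) (hrho_r : 0 < rr) (hrho_d : 0 < rd) (hrho_s : 0 < rs)
  (hRate : 0 < Rate).

Definition csi_cost (M K : R) : R :=
  al * K / (M - K) * (Rpower 2 (Rate / K) - 1) + M * rr + K * rd + rs.

Lemma zeta_csi_cost M K : zeta_csi M K Rate th = / (1 / Rate * csi_cost M K).
Proof. reflexivity. Qed.

Definition csi_weight (K : R) : R := al * K * (Rpower 2 (Rate / K) - 1).

(* [csi_envelope (Rate / K) + rho_s] is the minimum of [csi_cost M K] over [M]. *)
Definition csi_envelope (x : R) : R :=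
  2 * sqrt (rr * (al * (Rate / x) * (Rpower 2 x - 1))) + Rate / x * (rr + rd).

Lemma csi_weight_pos K : 0 < K -> 0 < csi_weight K.
Proof.
  intro hK; pose proof (Rpower2_gt_1 (Rate / K) ltac:(apply Rdiv_lt_0_compat; lra)).
  unfold csi_weight; apply Rmult_lt_0_compat; [nra | lra].
Qed.

Lemma csi_cost_split M K : 0 < K < M ->
  csi_cost M K = csi_weight K / (M - K) + rr * (M - K) + K * (rr + rd) + rs.
Proof. intro hK; unfold csi_cost, csi_weight; field; lra. Qed.

Lemma csi_envelope_at K : 0 < K ->
  csi_envelope (Rate / K) = 2 * sqrt (rr * csi_weight K) + K * (rr + rd).
Proof.
  intro hK; unfold csi_envelope, csi_weight.
  replace (Rate / (Rate / K)) with K by (field; lra); reflexivity.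
Qed.

Lemma csi_cost_ge_envelope M K : 0 < K < M -> csi_envelope (Rate / K) + rs <= csi_cost M K.
Proof.
  intro hK; rewrite csi_cost_split, csi_envelope_at by lra.
  pose proof (amgm_le (csi_weight K) rr (M - K) (csi_weight_pos K ltac:(lra)) hrho_r ltac:(lra)).
  lra.
Qed.

Lemma csi_cost_optimal_M K : 0 < K ->
  csi_cost (K + sqrt (csi_weight K / rr)) K = csi_envelope (Rate / K) + rs.
Proof.
  intro hK; pose proof (csi_weight_pos K hK).
  assert (0 < sqrt (csi_weight K / rr)) by (apply sqrt_lt_R0, Rdiv_lt_0_compat; lra).
  rewrite csi_cost_split, csi_envelope_at by lra.
  replace (K + sqrt (csi_weight K / rr) - K) with (sqrt (csi_weight K / rr)) by ring.
  rewrite amgm_eq by lra; ring.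
Qed.

Lemma csi_cost_pos M K : 0 < K < M -> 0 < csi_cost M K.
Proof.
  intro hK; rewrite csi_cost_split by lra.
  assert (0 < csi_weight K / (M - K)) by (apply Rdiv_lt_0_compat; [apply csi_weight_pos|]; lra).
  nra.
Qed.

Lemma zeta_csi_le_iff M K M' K' : 0 < K < M -> 0 < K' < M' ->
  (zeta_csi M' K' Rate th <= zeta_csi M K Rate th <-> csi_cost M K <= csi_cost M' K').
Proof.
  intros hK hK'; rewrite !zeta_csi_cost.
  pose proof (csi_cost_pos M K hK); pose proof (csi_cost_pos M' K' hK').
  assert (hR : 0 < 1 / Rate) by (apply Rdiv_lt_0_compat; lra).
  split; intro hle.
  - apply (Rmult_le_reg_l (1 / Rate)); [exact hR|].
    rewrite <- (Rinv_inv (1 / Rate * csi_cost M K)), <- (Rinv_inv (1 / Rate * csi_cost M' K')).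
    apply Rinv_le_contravar; [apply Rinv_0_lt_compat, Rmult_lt_0_compat; lra | exact hle].
  - apply Rinv_le_contravar; [apply Rmult_lt_0_compat; lra | apply Rmult_le_compat_l; lra].
Qed.

Lemma is_derive_csi_envelope x : 0 < x ->
  is_derive csi_envelope x ((sqrt (rr * al * Rate) * g x - Rate * (rr + rd)) / x ^ 2).
Proof.
  intro hx; pose proof (Rpower2_gt_1 x hx).
  set (Q := rr * (al * (Rate / x) * (Rpower 2 x - 1))).
  assert (hQ : 0 < Q).
  { unfold Q; pose proof (Rdiv_lt_0_compat Rate x hRate hx).
    apply Rmult_lt_0_compat; [lra|]; apply Rmult_lt_0_compat; [nra | lra]. }
  pose proof (sqrt_lt_R0 Q hQ).
  assert (hsqrt : sqrt Q * sqrt (x / (Rpower 2 x - 1)) = sqrt (rr * al * Rate)).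
  { rewrite <- sqrt_mult_alt by lra; f_equal; unfold Q; field; lra. }
  assert (hsq : sqrt (rr * al * Rate) * sqrt (rr * al * Rate) = rr * al * Rate)
    by (apply sqrt_sqrt, Rlt_le; repeat apply Rmult_lt_0_compat; lra).
  replace (sqrt (rr * al * Rate) * g x) with (rr * al * Rate * gnum x / sqrt Q).
  2: { rewrite g_eq; set (s := sqrt (rr * al * Rate)) in *.
       rewrite <- hsq, <- hsqrt at 1; field; lra. }
  unfold csi_envelope, Q, gnum, Rpower, Rdiv, Rminus in *; auto_derive; [repeat split; lra | field; lra].
Qed.

Variable x0 : R.
Hypotheses (hx0 : 0 < x0) (hx0_crit : sqrt (rr * al * Rate) * g x0 = Rate * (rr + rd)).

Lemma csi_envelope_decr a b : 0 < a -> a < b -> b <= x0 -> csi_envelope b < csi_envelope a.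
Proof.
  intros ha hab hb; eapply strict_decr_of_derive_neg;
    [exact hab | intros; apply is_derive_csi_envelope; lra |].
  intros c hc; pose proof (g_incr c x0 ltac:(lra) ltac:(lra)).
  assert (0 < sqrt (rr * al * Rate)) by (apply sqrt_lt_R0; repeat apply Rmult_lt_0_compat; lra).
  assert (0 < c ^ 2) by (apply pow_lt; lra).
  apply Rlt_div_l; nra.
Qed.

Lemma csi_envelope_incr a b : x0 <= a -> a < b -> csi_envelope a < csi_envelope b.
Proof.
  intros ha hab; eapply strict_incr_of_derive_pos;
    [exact hab | intros; apply is_derive_csi_envelope; lra |].
  intros c hc; pose proof (g_incr x0 c ltac:(lra) ltac:(lra)).
  assert (0 < sqrt (rr * al * Rate)) by (apply sqrt_lt_R0; repeat apply Rmult_lt_0_compat; lra).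
  apply Rdiv_lt_0_compat; [nra | apply pow_lt; lra].
Qed.

Hypothesis hKmax : 1 < Kmax th.

Let xc := clamp (Rate / Kmax th) Rate x0.

Lemma csi_x_range K : 1 <= K <= Kmax th -> Rate / Kmax th <= Rate / K <= Rate.
Proof.
  intro hK; split.
  - apply Rmult_le_compat_l; [lra | apply Rinv_le_contravar; lra].
  - apply Rle_div_l; nra.
Qed.

Lemma csi_x_lo_lt : 0 < Rate / Kmax th < Rate.
Proof. split; [apply Rdiv_lt_0_compat | apply Rlt_div_l]; nra. Qed.

Lemma csi_envelope_clamp_lt K : 1 <= K <= Kmax th -> Rate / K <> xc ->
  csi_envelope xc < csi_envelope (Rate / K).
Proof.
  intros hK hne; pose proof csi_x_lo_lt.
  apply (clamp_strict_argmin csi_envelope x0 (Rate / Kmax th) Rate); try lra.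
  - exact csi_envelope_decr.
  - exact csi_envelope_incr.
  - now apply csi_x_range.
  - exact hne.
Qed.

Let K0 := Rate / xc.
Let M0 := K0 + sqrt (csi_weight K0 / rr).

Lemma csi_K0_x : Rate / K0 = xc.
Proof.
  pose proof csi_x_lo_lt; pose proof (clamp_spec (Rate / Kmax th) Rate x0 ltac:(lra)).
  unfold K0, xc in *; field; lra.
Qed.

Lemma csi_domain_K0 : csi_domain M0 K0 th.
Proof.
  pose proof csi_x_lo_lt.
  destruct (clamp_spec (Rate / Kmax th) Rate x0 ltac:(lra)) as [hxc _]; fold xc in hxc.
  assert (hlo : Rate <= xc * Kmax th) by (apply Rle_div_l; lra).
  assert (hK0 : 1 <= K0 <= Kmax th).
  { unfold K0; split; [apply Rle_div_r | apply Rle_div_l]; lra. }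
  assert (0 < sqrt (csi_weight K0 / rr)).
  { apply sqrt_lt_R0, Rdiv_lt_0_compat; [apply csi_weight_pos|]; lra. }
  unfold csi_domain, M0; lra.
Qed.

Lemma csi_cost_K0 : csi_cost M0 K0 = csi_envelope xc + rs.
Proof.
  destruct csi_domain_K0 as [hK0 _]; unfold M0.
  rewrite csi_cost_optimal_M, csi_K0_x by lra; reflexivity.
Qed.

Lemma csi_cost_ge_K0 M K : csi_domain M K th -> csi_cost M0 K0 <= csi_cost M K.
Proof.
  intros (hK1 & hK2 & hKM); rewrite csi_cost_K0.
  pose proof (csi_cost_ge_envelope M K ltac:(lra)).
  destruct (Req_dec (Rate / K) xc) as [heq | hne].
  - rewrite <- heq; lra.
  - pose proof (csi_envelope_clamp_lt K ltac:(lra) hne); lra.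
Qed.

Lemma is_csi_maximizer_K0 : is_csi_maximizer M0 K0 Rate th.
Proof.
  split; [exact csi_domain_K0|]; intros M K hdom.
  destruct csi_domain_K0 as (hK0 & _ & hM0); pose proof hdom as (hK & _ & hM).
  apply zeta_csi_le_iff; [lra | lra | now apply csi_cost_ge_K0].
Qed.

Lemma is_csi_maximizer_K M K : is_csi_maximizer M K Rate th -> K = K0.
Proof.
  intros [(hK1 & hK2 & hKM) hmax].
  destruct csi_domain_K0 as (hK0 & _ & hM0).
  assert (hle : csi_cost M K <= csi_cost M0 K0).
  { apply (zeta_csi_le_iff M K M0 K0); try lra; apply hmax, csi_domain_K0. }
  rewrite csi_cost_K0 in hle; pose proof (csi_cost_ge_envelope M K ltac:(lra)).
  destruct (Req_dec (Rate / K) xc) as [heq | hne].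
  - unfold K0; rewrite <- heq; field; lra.
  - pose proof (csi_envelope_clamp_lt K ltac:(lra) hne); lra.
Qed.

Lemma Kcsi_eq : Kcsi Rate th = Rate / clamp (Rate / Kmax th) Rate x0.
Proof.
  assert (hex : exists K M, is_csi_maximizer M K Rate th) by (exists K0, M0; exact is_csi_maximizer_K0).
  destruct (epsilon_spec (inhabits 0) _ hex) as [M hmax].
  exact (is_csi_maximizer_K M _ hmax).
Qed.

End CsiOptimum.

Section Thresholds.

Variables (th : Theta) (Rate : R).
Local Notation al := (alpha th).
Local Notation rr := (rho_r th).
Local Notation rd := (rho_d th).
Local Notation Km := (Kmax th).
Local Notation r1 := (1 + rho_d th / rho_r th).
Hypotheses (halpha : 0 < al) (hrho_r : 0 < rr) (hrho_d : 0 < rd) (hrho_s : 0 < rho_s th)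
  (hKmax : 1 < Km) (hRate : 0 < Rate).

Lemma r1_pos : 0 < r1.
Proof. pose proof (Rdiv_lt_0_compat rd rr hrho_d hrho_r); lra. Qed.

Lemma xprime_spec : 0 < xprime Rate th /\ g (xprime Rate th) = r1 * sqrt (Rate * rr / al).
Proof.
  unfold xprime; apply epsilon_spec, g_surj, Rmult_lt_0_compat; [exact r1_pos|].
  apply sqrt_lt_R0, Rdiv_lt_0_compat; nra.
Qed.

Lemma cTheta_spec : 0 < cTheta th /\ g (cTheta th) / sqrt (cTheta th) = r1 * sqrt (Km * rr / al).
Proof.
  unfold cTheta; apply epsilon_spec, g_div_sqrt_surj, Rmult_lt_0_compat; [exact r1_pos|].
  apply sqrt_lt_R0, Rdiv_lt_0_compat; nra.
Qed.

Lemma xprime_crit : sqrt (rr * al * Rate) * g (xprime Rate th) = Rate * (rr + rd).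
Proof.
  rewrite (proj2 xprime_spec).
  assert (hprod : sqrt (rr * al * Rate) * sqrt (Rate * rr / al) = Rate * rr).
  { rewrite <- sqrt_mult_alt by (apply Rlt_le; repeat apply Rmult_lt_0_compat; lra).
    apply sqrt_lem_1; [| nra | field; lra].
    apply Rlt_le; repeat apply Rmult_lt_0_compat; try apply Rinv_0_lt_compat; lra. }
  transitivity (r1 * (sqrt (rr * al * Rate) * sqrt (Rate * rr / al))); [ring|].
  rewrite hprod; field; lra.
Qed.

Lemma div_lt_Kmax_iff y : 0 < y -> (Rate / y < Km <-> Rate / Km < y).
Proof.
  intro hy; rewrite !Rlt_div_l by lra; split; intro; lra.
Qed.

Lemma R_max_iff : Rate < R_max th <-> Rate / xprime Rate th < Km.
Proof.
  destruct xprime_spec as [hxp hgxp]; destruct cTheta_spec as [hc hgc].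
  set (lo := Rate / Km).
  assert (hlo : 0 < lo) by (apply Rdiv_lt_0_compat; lra).
  assert (hsqrt_lo : sqrt (Km * rr / al) * sqrt lo = sqrt (Rate * rr / al)).
  { rewrite <- sqrt_mult_alt by (apply Rlt_le, Rdiv_lt_0_compat; nra).
    f_equal; unfold lo; field; lra. }
  unfold R_max; rewrite div_lt_Kmax_iff by exact hxp; fold lo.
  transitivity (lo < cTheta th).
  { unfold lo; rewrite Rlt_div_l by lra; split; intro; lra. }
  rewrite (lt_iff_of_strict_incr _ lo _ g_div_sqrt_incr hlo hc), hgc.
  rewrite (lt_iff_of_strict_incr _ lo _ g_incr hlo hxp), hgxp, <- hsqrt_lo, <- Rmult_assoc.
  apply Rlt_div_l, sqrt_lt_R0, hlo.
Qed.

Lemma Kcsi_lt_Kmax_iff : Rate / xprime Rate th < Km <-> Kcsi Rate th < Km.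
Proof.
  destruct xprime_spec as [hxp _].
  assert (hlo : 0 < Rate / Km < Rate) by (split; [apply Rdiv_lt_0_compat | apply Rlt_div_l]; nra).
  pose proof (clamp_spec (Rate / Km) Rate (xprime Rate th) ltac:(lra)) as [hc _].
  rewrite (Kcsi_eq th Rate halpha hrho_r hrho_d hrho_s hRate _ hxp xprime_crit hKmax).
  rewrite !div_lt_Kmax_iff by lra.
  symmetry; apply lo_lt_clamp_iff; lra.
Qed.

Lemma Kcsi_gt_1_iff :
  rr < al / r1 ^ 2 * (g Rate ^ 2 / Rate) <-> 1 < Kcsi Rate th.
Proof.
  destruct xprime_spec as [hxp hgxp]; pose proof r1_pos.
  assert (hlo : 0 < Rate / Km < Rate) by (split; [apply Rdiv_lt_0_compat | apply Rlt_div_l]; nra).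
  pose proof (clamp_spec (Rate / Km) Rate (xprime Rate th) ltac:(lra)) as [hc _].
  rewrite (Kcsi_eq th Rate halpha hrho_r hrho_d hrho_s hRate _ hxp xprime_crit hKmax).
  rewrite <- Rlt_div_r, Rmult_1_l, clamp_lt_hi_iff by lra.
  rewrite (lt_iff_of_strict_incr _ _ _ g_incr hxp hRate), hgxp.
  assert (hq : 0 < Rate * rr / al) by (apply Rdiv_lt_0_compat; nra).
  pose proof (sqrt_pos (Rate * rr / al)); pose proof (g_pos Rate hRate).
  rewrite (lt_iff_pow2_lt (r1 * _)), Rpow_mult_distr, (pow2_sqrt (Rate * rr / al)) by nra.
  replace (al / r1 ^ 2 * (g Rate ^ 2 / Rate)) with (g Rate ^ 2 / (r1 ^ 2 * Rate / al))
    by (field; repeat split; lra).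
  rewrite <- Rlt_div_r by (apply Rdiv_lt_0_compat; [apply Rmult_lt_0_compat; [apply pow_lt|]|]; lra).
  replace (rr * (r1 ^ 2 * Rate / al)) with (r1 ^ 2 * (Rate * rr / al)) by (field; lra).
  reflexivity.
Qed.

End Thresholds.

Theorem lemma5 (th : Theta) :
  1 < alpha th -> 0 < rho_r th -> 0 < rho_d th -> 0 < rho_s th -> 0 < rho_0 th ->
  1 < Tt th -> 10 < Kmax th ->
  forall Rate : R, 0 < Rate ->
    ((Rate < R_max th <-> Rate / xprime Rate th < Kmax th) /\
     (Rate / xprime Rate th < Kmax th <-> Kcsi Rate th < Kmax th)) /\
    (rho_r th < alpha th / (1 + rho_d th / rho_r th) ^ 2 * (g Rate ^ 2 / Rate)
       <-> 1 < Kcsi Rate th).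
Proof.
  intros halpha hrho_r hrho_d hrho_s _ _ hKmax Rate hRate.
  assert (halpha' : 0 < alpha th) by lra; assert (hKmax' : 1 < Kmax th) by lra.
  split; [split|].
  - exact (R_max_iff th Rate halpha' hrho_r hrho_d hKmax' hRate).
  - exact (Kcsi_lt_Kmax_iff th Rate halpha' hrho_r hrho_d hrho_s hKmax' hRate).
  - exact (Kcsi_gt_1_iff th Rate halpha' hrho_r hrho_d hrho_s hKmax' hRate).
Qed.
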